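(* Let $(\mathcal{M},\omega)$ be a symplectic manifold of dimension $2d$, $\pi:\mathcal{M}\to\mathcal{B}$ a fibration in compact connected Lagrangian tori, and $H=F\circ\pi$ with $F\in C^\infty(\mathcal{B})$ satisfying the Rüssmann condition. Then the set of points $b\in\mathcal{B}$ such that there is no nonzero $k\in E_b$ with $dF_b(k)=0$ (i.e. the set of tori $\pi^{-1}(b)$ on which the dynamics of the Hamiltonian vector field $X_H$ is ergodic) is dense in $\mathcal{B}$.
   Context: Near each point of $\mathcal{B}$ there are canonical action-angle coordinates $(x,\xi):\pi^{-1}(\mathcal{O})\to\mathbb{T}^d\times\mathbb{R}^d$, $\mathbb{T}^d=\mathbb{R}^d/\mathbb{Z}^d$. The Duistermaat connection $\nabla$ on $\mathcal{B}$ is the torsion-free flat connection for which the $d\xi_j$ are parallel. The resonance bundle $E\subset T\mathcal{B}$ is the lattice subbundle whose fiber $E_b$ is the $\mathbb{Z}$-span of $\partial/\partial\xi_1,\dots,\partial/\partial\xi_d$ at $b$ (dual to the lattice spanned by the $d\xi_j$); local sections of $E$ are parallel. On $\pi^{-1}(b)$, $X_H$ is the linear flow $\dot x_j=\partial F/\partial\xi_j(b)$, and a nonzero $k\in E_b$ with $dF_b(k)=\sum_jk_j\partial F/\partial\xi_j(b)=0$ is a resonance relation. Rüssmann condition: for every open $\mathcal{O}$ and every non-vanishing parallel vector field $X$ on $\mathcal{O}$, $dF(X)$ does not vanish identically on any nonempty open subset of $\mathcal{O}$. *)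

From HB Require Import structures.
From mathcomp Require Import all_boot all_order all_algebra.
From mathcomp Require Import all_classical all_reals all_analysis.
Set Implicit Arguments. Unset Strict Implicit. Unset Printing Implicit Defensive.
Import Order.TTheory GRing.Theory Num.Theory.
Import numFieldNormedType.Exports.
Local Open Scope classical_set_scope.
Local Open Scope ring_scope.

Notation coord R d := ('rV[R]_d).

Fixpoint iderive (R : realType) (d : nat) (vs : seq (coord R d))
    (f : coord R d -> R) : coord R d -> R :=
  match vs with
  | [::] => f
  | v :: vs' => fun x => 'D_v (iderive vs' f) x
  end.

Definition smooth_on (R : realType) (d : nat) (A : set (coord R d))
    (f : coord R d -> R) : Prop :=
  forall vs : seq (coord R d),
    (forall x, A x -> {for x, continuous (iderive vs f)}) /\
    (forall x v, A x -> derivable (iderive vs f) x v).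

(* An integral affine atlas on a topological space B (the structure induced
   on the base of a Lagrangian torus fibration by the action coordinates):
   charts phi i : U i -> R^d (the action coordinates xi), homeomorphisms onto
   open subsets, with left inverses psi i, whose transition maps are locally
   of the form xi |-> xi A + c with A in GL(d, Z). *)
Record int_affine_atlas (R : realType) (d : nat) (B : topologicalType) := {
  ch_idx : Type;
  ch_dom : ch_idx -> set B;
  ch_map : ch_idx -> B -> coord R d;
  ch_inv : ch_idx -> coord R d -> B;
  ch_dom_open : forall i, open (ch_dom i);
  ch_cover : forall b, exists i, ch_dom i b;
  ch_cont : forall i, {within ch_dom i, continuous (ch_map i)};
  ch_openmap : forall i (W : set B), open W -> W `<=` ch_dom i ->
      open (ch_map i @` W);
  ch_invK : forall i b, ch_dom i b -> ch_inv i (ch_map i b) = b;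
  ch_trans : forall i j b, ch_dom i b -> ch_dom j b ->
      exists W : set B, [/\ open W, W b &
      exists (A : 'M[int]_d) (c : coord R d),
        (\det A = 1 \/ \det A = -1) /\
        forall b', W b' -> ch_dom i b' -> ch_dom j b' ->
          ch_map j b' = ch_map i b' *m map_mx (fun z : int => z%:~R) A + c]
}.

Arguments ch_idx {R d B}.
Arguments ch_dom {R d B} _ _.
Arguments ch_map {R d B} _ _.
Arguments ch_inv {R d B} _ _.

Section Defs.
Variables (R : realType) (d : nat) (B : topologicalType)
  (atl : int_affine_atlas R d B).

Definition smooth_fun (F : B -> R) : Prop :=
  forall i, smooth_on (ch_map atl i @` ch_dom atl i) (F \o ch_inv atl i).

(* dF_b(v), for v a tangent vector atl b given by its components in chart i
   (i.e. v = sum_j v_j d/dxi_j). *)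
Definition dF_chart (F : B -> R) (i : ch_idx atl) (b : B) (v : coord R d) : R :=
  'D_v (F \o ch_inv atl i) (ch_map atl i b).

(* No resonance atl b: no nonzero k in E_b (the Z-span of the d/dxi_j) with
   dF_b(k) = 0. (Stated in every chart containing b; the condition is
   chart independent.) *)
Definition nonresonant (F : B -> R) (b : B) : Prop :=
  forall i, ch_dom atl i b ->
  forall k : 'rV[int]_d, k != 0 ->
    dF_chart F i b (map_mx (fun z : int => z%:~R) k) != 0.

(* A vector field on O, given by its components X i b in each chart i
   (meaningful for b in O and in the chart domain). *)
Definition vector_field_on (O : set B) (X : ch_idx atl -> B -> coord R d) :=
  forall i j b, O b -> ch_dom atl i b -> ch_dom atl j b ->
    X j b = 'D_(X i b) (ch_map atl j \o ch_inv atl i) (ch_map atl i b).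

(* Parallel for the Duistermaat connection: components (w.r.t. the parallel
   frame d/dxi) are locally constant. *)
Definition parallel_on (O : set B) (X : ch_idx atl -> B -> coord R d) :=
  vector_field_on O X /\
  forall i b, O b -> ch_dom atl i b ->
    exists W : set B, [/\ open W, W b &
      forall b', W b' -> O b' -> ch_dom atl i b' -> X i b' = X i b].

Definition nonvanishing_on (O : set B) (X : ch_idx atl -> B -> coord R d) :=
  forall i b, O b -> ch_dom atl i b -> X i b != 0.

Definition russmann (F : B -> R) : Prop :=
  forall (O : set B) (X : ch_idx atl -> B -> coord R d),
    open O -> parallel_on O X -> nonvanishing_on O X ->
    forall W : set B, open W -> W `<=` O -> W !=set0 ->
      ~ (forall i b, W b -> ch_dom atl i b -> dF_chart F i b (X i b) = 0).

End Defs.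

(* Fix a chart around a point of an open set U. For every nonzero integer
   vector k, the derivative of F along the constant vector field k of the
   chart is a continuous function on the chart image; the vector field is
   parallel and nonvanishing (transition maps are affine with matrices in
   GL(d, Z)), so by the Russmann condition this derivative vanishes on no
   nonempty open set. Its zero set is therefore nowhere dense, and since the
   nonzero integer vectors are countable, the Baire category theorem yields a
   point of U at which no dF(k) vanishes. Nonresonance can be checked in a
   single chart, because a change of chart maps Z^d \ {0} onto itself. *)

From HB Require Import structures.
From mathcomp Require Import all_boot all_order all_algebra.
From mathcomp Require Import all_classical all_reals all_analysis.
Import Order.TTheory GRing.Theory Num.Theory.
Import numFieldNormedType.Exports.
Local Open Scope classical_set_scope.
Local Open Scope ring_scope.
Set Implicit Arguments. Unset Strict Implicit.

(* The library declares completeness of matrices over a complete type, but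
   does not join it with their normed-module structure over a realType. *)
HB.instance Definition _ (R : realType) (m n : nat) :=
  Uniform_isComplete.Build 'M[R]_(m, n) (@mx_complete R m n).

Local Notation intmx M := (map_mx (fun z : int => z%:~R) M).

Lemma intmx_eq0 (R : numDomainType) m n (k : 'M[int]_(m, n)) :
  (intmx k == 0 :> 'M[R]_(m, n)) = (k == 0).
Proof.
apply/eqP/eqP => [/matrixP kR0|->]; last by rewrite map_mx0.
by apply/matrixP => i j; have /eqP := kR0 i j; rewrite !mxE intr_eq0 => /eqP.
Qed.

Lemma unimodular_intmx_unit (R : numFieldType) n (A : 'M[int]_n) :
  \det A = 1 \/ \det A = -1 -> (intmx A : 'M[R]_n) \in unitmx.
Proof.
rewrite unitmxE det_map_mx.
by case=> ->; rewrite ?rmorphN rmorph1 ?unitrN unitr1.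
Qed.

Lemma derive_comp_affine (R : numFieldType) (W : normedModType R) d
    (g : 'rV[R]_d -> W) (M : 'M[R]_d) (c x v : 'rV[R]_d) :
  'D_v (g \o (fun y => y *m M + c)) x = 'D_(v *m M) g (x *m M + c).
Proof.
by rewrite /derive /=; under eq_fun do rewrite mulmxDl -scalemxAl -addrA.
Qed.

Lemma near_eq_derive_comp_affine (R : numFieldType) (W : normedModType R) d
    (f g : 'rV[R]_d -> W) (M : 'M[R]_d) (c x v : 'rV[R]_d) :
  (\forall y \near x, f y = g (y *m M + c)) ->
  'D_v f x = 'D_(v *m M) g (x *m M + c).
Proof. by move=> fg; rewrite -derive_comp_affine; exact: near_eq_derive. Qed.

Lemma near_eq_derive_affine (R : numFieldType) d
    (f : 'rV[R]_d -> 'rV[R]_d) (M : 'M[R]_d) (c x v : 'rV[R]_d) :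
  (\forall y \near x, f y = y *m M + c) -> 'D_v f x = v *m M.
Proof.
by move=> fMc; rewrite (@near_eq_derive_comp_affine _ _ _ _ id M c) ?derive_id.
Qed.

Lemma exists_common_nonzero (R : realType) (T : completeNormedModType R)
    (J : countType) (f : J -> T -> R) (G : set T) :
  open G -> G !=set0 -> (forall i y, G y -> {for y, continuous (f i)}) ->
  (forall i (O : set T), open O -> O !=set0 -> O `<=` G ->
     ~ (forall y, O y -> f i y = 0)) ->
  exists2 y, G y & forall i, f i y != 0.
Proof.
move=> oG G0 fC fflat.
pose Z i := [set y | G y /\ f i y = 0].
have Z_nowhere_dense i : open (~` closure (Z i)) /\ dense (~` closure (Z i)).
  split; first exact/closed_openC/closed_closure.
  move=> O [x Ox] oO; apply: contrapT => OZ.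
  have OZi : O `<=` closure (Z i).
    by move=> y Oy; apply: contrapT => Zy; apply: OZ; exists y.
  have [y [[Gy _] Oy]] := OZi x Ox O (open_nbhs_nbhs (conj oO Ox)).
  apply: (fflat i (O `&` G)); [exact: openI | by exists y | exact: subIsetr |].
  move=> z [Oz Gz]; apply: contrapT => /eqP fz.
  have fz_near : nbhs z [set w | f i w != 0].
    apply: (fC i z Gz [set r | r != 0]).
    by apply: open_nbhs_nbhs; split => //; exact: open_neq.
  by have [w [[_ fw0] /eqP]] := OZi z Oz _ fz_near.
pose U n := if unpickle n is Some i then ~` closure (Z i) else setT.
have oU n : open (U n) /\ dense (U n).
  rewrite /U; case: unpickle => [i|]; first exact: Z_nowhere_dense.
  by split; [exact: openT | move=> O O0 _; rewrite setIT].
have [y [Gy Uy]] := Baire oU G0 oG.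
exists y => // i; apply/eqP => fy0.
by have := Uy (pickle i) I; rewrite /U pickleK; apply; exact: subset_closure.
Qed.

Section Charts.
Variables (R : realType) (d : nat) (B : topologicalType)
  (atl : int_affine_atlas R d B).
Local Notation dom := (ch_dom atl).
Local Notation chm := (ch_map atl).
Local Notation chi := (ch_inv atl).

Lemma open_chart_preimage i (N : set 'rV[R]_d) :
  open N -> open (dom i `&` chm i @^-1` N).
Proof.
move=> oN; have := @ch_cont _ _ _ atl i.
rewrite continuous_open_subspace; last exact: ch_dom_open.
by move/continuous_inP => /(_ (ch_dom_open i)); apply.
Qed.

Lemma chart_transition i0 i b : dom i0 b -> dom i b ->
  exists (A : 'M[int]_d) (c : 'rV[R]_d) (N : set 'rV[R]_d),
  [/\ \det A = 1 \/ \det A = -1, open N, N (chm i0 b) &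
      forall y, N y -> chm i (chi i0 y) = y *m intmx A + c /\
                       chi i (y *m intmx A + c) = chi i0 y].
Proof.
move=> h0 h1; have [W [oW Wb [A [c [dA HA]]]]] := ch_trans h0 h1.
exists A, c, (chm i0 @` (W `&` dom i0 `&` dom i)); split => //.
- apply: ch_openmap; last by move=> z [[]].
  by apply: openI; [apply: openI => //|]; apply: ch_dom_open.
- by exists b.
move=> y [b' [[Wb' d0] d1] <-]; rewrite (ch_invK d0) -(HA b') //.
by rewrite (ch_invK d1).
Qed.

Lemma derive_transition i0 i b : dom i0 b -> dom i b ->
  exists (A : 'M[int]_d) (N : set 'rV[R]_d),
  [/\ \det A = 1 \/ \det A = -1, open N, N (chm i0 b) &
      forall y v, N y -> 'D_v (chm i \o chi i0) y = v *m intmx A].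
Proof.
move=> h0 h1; have [A [c [N [dA oN Nb HN]]]] := chart_transition h0 h1.
exists A, N; split => // y v Ny; apply: (@near_eq_derive_affine _ _ _ _ c).
by apply: filterS (open_nbhs_nbhs (conj oN Ny)) => z /HN [].
Qed.

Lemma derive_chart_change (W : normedModType R) (G : B -> W) i0 i b v :
  dom i0 b -> dom i b ->
  'D_v (G \o chi i0) (chm i0 b) =
  'D_('D_v (chm i \o chi i0) (chm i0 b)) (G \o chi i) (chm i b).
Proof.
move=> h0 h1; have [A [c [N [_ oN Nb HN]]]] := chart_transition h0 h1.
have nearN : \forall y \near chm i0 b, N y := open_nbhs_nbhs (conj oN Nb).
rewrite (@near_eq_derive_affine _ _ _ (intmx A) c); last first.
  by apply: filterS nearN => y /HN [].
have -> : chm i b = chm i0 b *m intmx A + c by rewrite -(HN _ Nb).1 ch_invK.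
apply: near_eq_derive_comp_affine; apply: filterS nearN => y /HN [_ Ey] /=.
by rewrite Ey.
Qed.

Definition chart_const_field i0 (v : 'rV[R]_d) : ch_idx atl -> B -> 'rV[R]_d :=
  fun i b => 'D_v (chm i \o chi i0) (chm i0 b).

Lemma chart_const_field_parallel i0 v :
  parallel_on (dom i0) (chart_const_field i0 v).
Proof.
split=> [i j b h0 hi hj|i b h0 hi]; first exact: derive_chart_change.
have [A [N [_ oN Nb DA]]] := derive_transition h0 hi.
exists (dom i0 `&` chm i0 @^-1` N).
split; [exact: open_chart_preimage | by [] |].
by move=> b' [h0' Nb'] _ _; rewrite /chart_const_field !DA.
Qed.

Lemma chart_const_field_nonvanishing i0 v :
  v != 0 -> nonvanishing_on (dom i0) (chart_const_field i0 v).
Proof.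
move=> v0 i b h0 hi; have [A [N [dA _ Nb DA]]] := derive_transition h0 hi.
rewrite /chart_const_field DA // mulmx_free_eq0 //.
by rewrite row_free_unit unimodular_intmx_unit.
Qed.

Lemma dF_chart_const_field (F : B -> R) i0 i b v : dom i0 b -> dom i b ->
  dF_chart F i b (chart_const_field i0 v i b) = 'D_v (F \o chi i0) (chm i0 b).
Proof. by move=> h0 hi; rewrite /dF_chart -derive_chart_change. Qed.

Lemma nonresonant_chart (F : B -> R) i0 b : dom i0 b ->
  (forall k : 'rV[int]_d, k != 0 -> dF_chart F i0 b (intmx k) != 0) ->
  nonresonant atl F b.
Proof.
move=> h0 nonres i hi k k0.
have [A [N [dA _ Nb DA]]] := derive_transition hi h0.
rewrite /dF_chart (derive_chart_change _ _ hi h0) DA // -map_mxM; apply: nonres.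
rewrite -(intmx_eq0 R) map_mxM mulmx_free_eq0 ?intmx_eq0 //.
by rewrite row_free_unit unimodular_intmx_unit.
Qed.

Lemma russmann_chart_nonflat (F : B -> R) i0 (v : 'rV[R]_d) (V : set 'rV[R]_d) :
  russmann atl F -> v != 0 -> open V -> V !=set0 -> V `<=` chm i0 @` dom i0 ->
  ~ (forall y, V y -> 'D_v (F \o chi i0) y = 0).
Proof.
move=> Frus v0 oV [y Vy] Vchart flat; have [b h0 yb] := Vchart y Vy.
apply: (Frus (dom i0) (chart_const_field i0 v) (ch_dom_open i0)
  (chart_const_field_parallel i0 v)
  (chart_const_field_nonvanishing (i0 := i0) v0)
  (dom i0 `&` chm i0 @^-1` V)).
- exact: open_chart_preimage.
- exact: subIsetl.
- by exists b; split => //; rewrite /= yb.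
by move=> i b' [h0' Vb'] hi; rewrite dF_chart_const_field //; exact: flat.
Qed.

End Charts.

Theorem mainTheorem11 (R : realType) (d : nat) (B : topologicalType)
  (atl : int_affine_atlas R d B) (F : B -> R) :
  smooth_fun atl F -> russmann atl F ->
  dense [set b | nonresonant atl F b].
Proof.
move=> Fsmooth Frus U [b Ub] oU.
have [i0 hb] := ch_cover atl b.
pose G := ch_map atl i0 @` (U `&` ch_dom atl i0).
pose f (k : {k : 'rV[int]_d | k != 0}) :=
  'D_(intmx (val k) : 'rV[R]_d) (F \o ch_inv atl i0).
have [_ [b0 [Ub0 hb0] <-] nonres] : exists2 y, G y & forall k, f k y != 0.
  apply: exists_common_nonzero.
  - by apply: ch_openmap; [exact: openI (ch_dom_open i0) | exact: subIsetr].
  - by exists (ch_map atl i0 b), b.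
  - move=> k _ [b' [_ hb'] <-].
    by apply: (Fsmooth i0 [:: intmx (val k)]).1; exists b'.
  - move=> [k /= k0] O oO O0 OG; apply: (russmann_chart_nonflat Frus _ oO O0).
      by rewrite intmx_eq0.
    by move=> y /OG [b' [_ hb'] <-]; exists b'.
exists b0; split => //; apply: (nonresonant_chart hb0) => k k0.
exact: (nonres (exist _ k k0)).
Qed.
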